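(* Let $F$ be a partially colored forest. If Alice can win the $3$-Reduced Coloring Game on $\mathcal{R}'(F)$, then Alice can win the $3$-coloring game on $F$.
   Context: A partial coloring assigns to some vertices colors from a set $C$ of $3$ colors so that adjacent colored vertices differ; a color is legal for an uncolored vertex $v$ if no neighbor of $v$ has it. The $k$-coloring game on a partially colored graph: Alice and Bob alternate, Alice first, each coloring an uncolored vertex with a legal color from a $k$-set of colors; Bob wins if at some point an uncolored vertex has no legal color, Alice wins if all vertices get colored. The $k$-Reduced Coloring Game ($k$-RCG) is the same except that: Alice may only color vertices of degree at least $k$; Alice wins once every vertex of degree at least $k$ is colored; Bob plays first; and Bob may pass. For a partially colored forest $F$, a trunk of $F$ is a maximal connected subgraph $R$ such that every colored vertex of $R$ is a leaf of $R$; $\mathcal{R}(F)$ is the partially colored forest formed by the disjoint union of all trunks of $F$ (a colored vertex lying in several trunks appears as a separate colored copy in each). For a graph $G$, $E_{>2}(G)$ is the set of edges $xy$ of $G$ with $d_G(x)>2$ or $d_G(y)>2$. The reduced graph of $F$ is $\mathcal{R}'(F)=\mathcal{R}(F)-\{xy: xy\notin E_{>2}(\mathcal{R}(F))\}$, i.e. $\mathcal{R}(F)$ with every edge both of whose endpoints have degree at most $2$ in $\mathcal{R}(F)$ deleted. *)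

From mathcomp Require Import all_boot.
Set Implicit Arguments.
Unset Strict Implicit.
Unset Printing Implicit Defensive.

(* Graphs: a finite vertex type V with adjacency relation adj : rel V
   (simple graph = symmetric, irreflexive).  Colors: 'I_k.
   A partial coloring is c : V -> option 'I_k (None = uncolored). *)

Section Graphs.
Variable V : finType.
Variable adj : rel V.

(* a forest: no cycle (a duplicate-free closed walk with >= 3 vertices) *)
Definition forest : Prop := forall p : seq V, ucycle adj p -> size p <= 2.

Definition degree (v : V) : nat := #|[set w | adj v w]|.

Variable k : nat.

Definition proper_partial (c : V -> option 'I_k) : Prop :=
  forall x y, adj x y -> c x != None -> c x != c y.

Definition legal (c : V -> option 'I_k) (v : V) (a : 'I_k) : bool :=
  [forall w, adj v w ==> (c w != Some a)].

Definition stuck (c : V -> option 'I_k) : Prop :=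
  exists v, c v = None /\ forall a, ~~ legal c v a.

Definition upd (c : V -> option 'I_k) (v : V) (a : 'I_k) : V -> option 'I_k :=
  fun w => if w == v then Some a else c w.

(* k-coloring game.  cg_alice c : Alice (to move) has a winning strategy
   from position c; cg_bob c : Alice wins from c when Bob is to move. *)
Inductive cg_alice : (V -> option 'I_k) -> Prop :=
| CGA_done c : (forall v, c v <> None) -> cg_alice c
| CGA_move c v a : ~ stuck c -> c v = None -> legal c v a ->
    cg_bob (upd c v a) -> cg_alice c
with cg_bob : (V -> option 'I_k) -> Prop :=
| CGB_done c : (forall v, c v <> None) -> cg_bob c
| CGB_move c : ~ stuck c ->
    (forall v a, c v = None -> legal c v a -> cg_alice (upd c v a)) ->
    cg_bob c.

Definition alice_wins_cg (c : V -> option 'I_k) : Prop := cg_alice c.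

Definition high (v : V) : bool := k <= degree v.

Definition rcg_done (c : V -> option 'I_k) : Prop :=
  forall v, high v -> c v <> None.

Inductive rcg_alice : (V -> option 'I_k) -> Prop :=
| RA_done c : rcg_done c -> rcg_alice c
| RA_move c v a : ~ stuck c -> high v -> c v = None -> legal c v a ->
    rcg_bob (upd c v a) -> rcg_alice c
with rcg_bob : (V -> option 'I_k) -> Prop :=
| RB_done c : rcg_done c -> rcg_bob c
| RB_move c : ~ stuck c ->
    rcg_alice c (* Bob passes *) ->
    (forall v a, c v = None -> legal c v a -> rcg_alice (upd c v a)) ->
    rcg_bob c.

(* Alice wins the k-RCG (Bob moves first) *)
Definition alice_wins_rcg (c : V -> option 'I_k) : Prop := rcg_bob c.

End Graphs.

(* A subgraph of (V, adj) is a pair (S, E) with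
   S a vertex set and E a symmetric set of ordered pairs (both orientations
   of each edge), each an edge of adj with both ends in S. *)
Section Reduced.
Variable V : finType.
Variable adj : rel V.
Variable k : nat.
Variable c : V -> option 'I_k.

Definition subg := ({set V} * {set (V * V)})%type.

Definition is_subgraph (R : subg) : bool :=
  [forall x, forall y, ((x, y) \in R.2) ==>
     [&& adj x y, x \in R.1, y \in R.1 & (y, x) \in R.2]].

Definition subg_le (R R' : subg) : bool := (R.1 \subset R'.1) && (R.2 \subset R'.2).

Definition subg_connected (R : subg) : bool :=
  (R.1 != set0) &&
  [forall x in R.1, forall y in R.1, connect [rel a b | (a, b) \in R.2] x y].

Definition subg_deg (R : subg) (x : V) : nat := #|[set y | (x, y) \in R.2]|.

Definition colored_leaves (R : subg) : bool :=
  [forall x in R.1, (c x != None) ==> (subg_deg R x == 1)].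

Definition trunk_cand (R : subg) : bool :=
  [&& is_subgraph R, subg_connected R & colored_leaves R].

Definition trunk (R : subg) : bool :=
  trunk_cand R && [forall R' : subg, trunk_cand R' ==> subg_le R R' ==> (R' == R)].

(* vertices of R(F): pairs (trunk, vertex of that trunk) -- disjoint union *)
Definition RV := {p : (subg * V) | trunk p.1 && (p.2 \in p.1.1)}.

Definition R_adj : rel RV :=
  fun u w => ((val u).1 == (val w).1) && (((val u).2, (val w).2) \in (val u).1.2).

Definition R_col (u : RV) : option 'I_k := c (val u).2.

Definition R'_adj : rel RV :=
  fun u w => R_adj u w && ((2 < degree R_adj u) || (2 < degree R_adj w)).

End Reduced.

From mathcomp Require Import all_boot.
From Stdlib Require Import FunctionalExtensionality.
Set Implicit Arguments. Unset Strict Implicit. Unset Printing Implicit Defensive.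

(* Each uncolored vertex v of F lies in exactly one trunk T, and every edge of F
   at v is an edge of T: by maximality of T, and, for a colored neighbour, because
   F has no cycle.  Hence the uncolored vertices of F and of R(F) correspond, the
   copy of v has at least the degree of v, and a copy of degree at least 3 keeps
   all its R(F)-edges in R'(F), which are the images of the F-edges at v.  Alice
   transports Bob's moves into R'(F) and plays in F the answers of her R'(F)
   strategy; legality agrees at the vertices she colors.  Once that strategy has
   colored every vertex of degree at least 3, each uncolored vertex of F has at
   most 2 neighbours and can never run out of the 3 colors.  The argument works
   for any number k >= 3 of colors. *)

Section LowDegree.
Variables (V : finType) (adj : rel V) (k : nat).
Implicit Types (d : V -> option 'I_k) (v : V) (a : 'I_k).

Definition uncolored d : {set V} := [set v | d v == None].

Lemma card_uncolored_upd d v a : d v = None ->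
  #|uncolored (upd d v a)| < #|uncolored d|.
Proof.
move=> dv; apply: proper_card; apply/properP; split.
  by apply/subsetP => w; rewrite !inE /upd; case: (w == v).
by exists v; rewrite !inE /upd ?eqxx ?dv.
Qed.

Lemma legal_exists_of_degree_lt d v : degree adj v < k -> exists a, legal adj d v a.
Proof.
move=> deg_v; pose used := pmap d (enum [set w | adj v w]).
have : ~~ ([set: 'I_k] \subset used).
  apply/negP => /subset_leq_card; rewrite cardsT card_ord; apply/negP.
  rewrite -ltnNge (leq_ltn_trans _ deg_v) // (leq_trans (card_size _)) //.
  by rewrite size_pmap (leq_trans (count_size _ _)) // -cardE.
case/subsetPn => a _ a_unused; exists a.
apply/forallP => w; apply/implyP => vw; apply: contra a_unused => /eqP dw.
by rewrite mem_pmap -dw map_f // mem_enum inE.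
Qed.

Lemma not_stuck_of_low_degree d :
  (forall v, d v = None -> degree adj v < k) -> ~ stuck adj d.
Proof.
move=> low_d [v [dv no_legal]].
have [a legal_a] := legal_exists_of_degree_lt d (low_d v dv).
by move/negP: (no_legal a).
Qed.

Lemma cg_wins_of_low_degree d :
  (forall v, d v = None -> degree adj v < k) -> cg_alice adj d /\ cg_bob adj d.
Proof.
have [n] := ubnP #|uncolored d|; elim: n => // n IH in d *.
rewrite ltnS => size_d low_d.
have not_stuck := not_stuck_of_low_degree low_d.
have next v a : d v = None -> cg_alice adj (upd d v a) /\ cg_bob adj (upd d v a).
  move=> dv; apply: IH; first exact: leq_trans (card_uncolored_upd a dv) size_d.
  by move=> w; rewrite /upd; case: eqP => // _; apply: low_d.
split; last by apply: CGB_move => // v a dv _; apply: (next v a dv).1.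
case: (pickP [pred v | d v == None]) => [v /eqP dv | all_colored].
  have [a legal_a] := legal_exists_of_degree_lt d (low_d v dv).
  exact: CGA_move not_stuck dv legal_a (next v a dv).2.
by apply: CGA_done => v dv; move: (all_colored v); rewrite /= dv eqxx.
Qed.

Lemma rcg_alice_of_bob d : rcg_bob adj d -> rcg_alice adj d.
Proof. by case=> [d' done_d' | d' _ pass _]; [apply: RA_done | apply: pass]. Qed.

End LowDegree.

Section Forests.
Variables (V : finType) (e : rel V).

Lemma uniq_path_leaf_last x p w y :
  (forall z, e w z -> z = y) -> (forall z, e z w -> z = y) ->
  path e x p -> uniq (x :: p) -> w \in p -> last x p = w.
Proof.
move=> out_w in_w ep up /splitPr wp; case: wp ep up => p1 p2.
rewrite last_cat -cat_cons cat_uniq /=.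
case: p2 => [|z p3] //; rewrite cat_path /=.
move=> /and4P [_ /in_w p1y /out_w zy _] /and5P [_ /norP [_ /norP [zp1 _]] _ _ _].
by rewrite zy -p1y mem_last in zp1.
Qed.

Lemma forest_no_closing_edge v p w : forest e ->
  path e v p -> uniq (v :: p) -> w \notin v :: p -> e (last v p) w -> e w v ->
  p = [::].
Proof.
move=> forest_e ep up; rewrite inE negb_or => /andP [wv wp] lw wv_edge.
have: cycle e (v :: rcons p w) && uniq (v :: rcons p w).
  rewrite /= !rcons_path ep lw last_rcons wv_edge rcons_uniq wp.
  by move: up => /= /andP [vp ->]; rewrite mem_rcons inE negb_or eq_sym wv vp.
by move/forest_e; rewrite /= size_rcons; case: p {ep up wp lw}.
Qed.

End Forests.

Scheme rcg_alice_ind' := Induction for rcg_alice Sort Prop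
  with rcg_bob_ind' := Induction for rcg_bob Sort Prop.

Section ReducedGraph.
Variables (V : finType) (adj : rel V) (k : nat) (c : V -> option 'I_k).
Hypotheses (adj_sym : symmetric adj) (adj_irr : irreflexive adj)
  (adj_forest : forest adj).

Local Notation cand := (trunk_cand adj c).
Local Notation edge_rel R := [rel a b | (a, b) \in R.2].

Lemma subgraph_edgeP (R : subg V) x y : is_subgraph adj R -> (x, y) \in R.2 ->
  [/\ adj x y, x \in R.1, y \in R.1 & (y, x) \in R.2].
Proof. by move=> /forallP/(_ x)/forallP/(_ y)/implyP H /H /and4P []. Qed.

Lemma cand_subgraph R : cand R -> is_subgraph adj R.
Proof. by case/and3P. Qed.

Lemma cand_connect R x y : cand R -> x \in R.1 -> y \in R.1 ->
  connect (edge_rel R) x y.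
Proof.
case/and3P=> _ /andP [_ /forall_inP conn_R] _ xR yR.
by move/forall_inP: (conn_R x xR); apply.
Qed.

Lemma cand_leaf R x : cand R -> x \in R.1 -> c x != None ->
  exists y, [set z | (x, z) \in R.2] = [set y].
Proof.
case/and3P=> _ _ /forall_inP leaves xR cx.
by move/implyP: (leaves x xR) => /(_ cx) /cards1P.
Qed.

Lemma cand_leaf_edge R x : cand R -> x \in R.1 -> c x != None ->
  exists y, (x, y) \in R.2.
Proof.
move=> candR xR cx; have [y Ny] := cand_leaf candR xR cx.
by exists y; have := set11 y; rewrite -Ny inE.
Qed.

Lemma cand_leaf_edge_uniq R x y z : cand R -> x \in R.1 -> c x != None ->
  (x, y) \in R.2 -> (x, z) \in R.2 -> y = z.
Proof.
move=> candR xR cx xy xz; have [a Na] := cand_leaf candR xR cx.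
have: y \in [set z | (x, z) \in R.2] by rewrite inE.
have: z \in [set z | (x, z) \in R.2] by rewrite inE.
by rewrite Na !inE => /eqP -> /eqP ->.
Qed.

(* A missing edge vw at a colored leaf w would close a cycle with the path of R
   from v to the unique R-neighbour of w. *)
Lemma cand_edge_at_leaf R v w : cand R -> v \in R.1 -> w \in R.1 -> c w != None ->
  adj v w -> (v, w) \in R.2.
Proof.
move=> candR vR wR cw vw; have subR := cand_subgraph candR.
case: (boolP ((v, w) \in R.2)) => // vw_out; exfalso.
have [y wy] := cand_leaf_edge candR wR cw.
have [wy_adj _ yR yw] := subgraph_edgeP subR wy.
have yv : y != v by apply: contraNneq vw_out => <-.
have leaf_w z : (w, z) \in R.2 -> z = y.
  by move=> wz; apply: cand_leaf_edge_uniq candR wR cw wz wy.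
have leaf_w' z : (z, w) \in R.2 -> z = y.
  by move=> zw; apply: leaf_w; have [] := subgraph_edgeP subR zw.
case/connectP: (cand_connect candR vR yR) => p0 p0_path y_last.
move: y_last; case: (shortenP p0_path) => p p_path p_uniq _ y_last {p0 p0_path}.
have wp : w \notin v :: p.
  rewrite inE negb_or; apply/andP; split.
    by apply: contraTneq vw => ->; rewrite adj_irr.
  apply/negP => /(uniq_path_leaf_last leaf_w leaf_w' p_path p_uniq) lw.
  by move: wy_adj; rewrite y_last lw adj_irr.
have p_adj : path adj v p.
  by apply: sub_path p_path => a b /(subgraph_edgeP subR) [].
have lpw : adj (last v p) w by rewrite -y_last adj_sym.
have wv : adj w v by rewrite adj_sym.
have p_nil := forest_no_closing_edge adj_forest p_adj p_uniq wp lpw wv.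
by move: yv; rewrite y_last p_nil eqxx.
Qed.

Lemma connected_extend (T : subg V) v w : subg_connected T -> v \in T.1 ->
  subg_connected (w |: T.1, [set (v, w); (w, v)] :|: T.2).
Proof.
case/andP=> _ /forall_inP connT vT; set T' : subg V := (_, _).
apply/andP; split; first by apply/set0Pn; exists w; rewrite !inE eqxx.
have to_v x : x \in T'.1 -> connect (edge_rel T') x v && connect (edge_rel T') v x.
  rewrite /= !inE => /orP [/eqP -> | xT]; first by rewrite !connect1 //= !inE eqxx ?orbT.
  have sub_T' a b : edge_rel T a b -> connect (edge_rel T') a b.
    by move=> ab; apply: connect1; rewrite /= inE; apply/orP; right.
  have [/forall_inP x_conn /forall_inP v_conn] := (connT x xT, connT v vT).
  by rewrite !(connect_sub sub_T') ?x_conn ?v_conn.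
apply/forall_inP => x /to_v/andP [xv _]; apply/forall_inP => y /to_v/andP [_ vy].
exact: connect_trans xv vy.
Qed.

Lemma cand_extend T v w : cand T -> v \in T.1 -> c v = None -> adj v w ->
  (v, w) \notin T.2 -> cand (w |: T.1, [set (v, w); (w, v)] :|: T.2).
Proof.
move=> candT vT cv vw vw_out; have [subT connT /forall_inP leavesT] := and3P candT.
set T' : subg V := (_, _).
have sub_T' : is_subgraph adj T'.
  apply/forallP => x; apply/forallP => y; apply/implyP; rewrite !inE.
  case/orP => [/orP [/eqP [-> ->] | /eqP [-> ->]] | xy].
  - by rewrite vw vT !eqxx !orbT.
  - by rewrite adj_sym vw vT !eqxx !orbT.
  - by have [-> -> -> ->] := subgraph_edgeP subT xy; rewrite !orbT.
have conn_T' := connected_extend w connT vT.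
have leaves_T' : colored_leaves c T'.
  apply/forall_inP => x x_T'; apply/implyP => cx.
  have xv : x != v by apply: contraNneq cx => ->; rewrite cv.
  case: (eqVneq x w) => [xw | xw]; last first.
    have xT : x \in T.1 by move: x_T'; rewrite /= !inE (negbTE xw).
    move/implyP: (leavesT x xT) => /(_ cx).
    congr (_ == _); apply: eq_card => y.
    by rewrite !inE !xpair_eqE (negbTE xv) (negbTE xw).
  subst x; have wT : w \notin T.1.
    by apply: contraNN vw_out => wT; apply: cand_edge_at_leaf.
  apply/cards1P; exists v; apply/setP => y.
  rewrite !inE !xpair_eqE (negbTE xv) eqxx /=.
  case: (boolP ((w, y) \in T.2)) => [wy | _]; last by rewrite orbF.
  by have [_ wT' _ _] := subgraph_edgeP subT wy; rewrite wT' in wT.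
by rewrite /trunk_cand sub_T' conn_T' leaves_T'.
Qed.

Lemma trunk_cand_of R : trunk adj c R -> cand R.
Proof. by case/andP. Qed.

Lemma trunk_edge T v w : trunk adj c T -> v \in T.1 -> c v = None -> adj v w ->
  (v, w) \in T.2.
Proof.
case/andP=> candT /forallP maxT vT cv vw; apply/negPn/negP => vw_out.
have := maxT (w |: T.1, [set (v, w); (w, v)] :|: T.2).
rewrite cand_extend // /subg_le !subsetUr /= => /eqP T'E.
by move: vw_out; rewrite -T'E /= !inE eqxx.
Qed.

(* I spreads along T from v, since edges of T at uncolored vertices lie in T'
   (trunk_edge) and colored vertices of T are leaves; so T <= T', and maximality
   of T gives equality. *)
Lemma trunk_uniq T T' v : trunk adj c T -> trunk adj c T' ->
  v \in T.1 -> v \in T'.1 -> c v = None -> T = T'.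
Proof.
move=> trT trT' vT vT' cv.
have /andP [candT /forallP maxT] := trT; have candT' := trunk_cand_of trT'.
have subT := cand_subgraph candT; have subT' := cand_subgraph candT'.
pose I x := (x \in T'.1) &&
  ((c x != None) ==> [exists y, [&& (x, y) \in T.2, c y == None & y \in T'.1]]).
have I_step a z : I a -> (a, z) \in T.2 -> I z.
  case/andP=> aT' a_nbr az; have [az_adj aT _ za] := subgraph_edgeP subT az.
  case: (eqVneq (c a) None) => ca.
    have [_ _ zT' _] := subgraph_edgeP subT' (trunk_edge trT' aT' ca az_adj).
    by rewrite /I zT'; apply/implyP => _; apply/existsP; exists a; rewrite za ca aT'.
  move: a_nbr; rewrite ca => /existsP [y /and3P [ay /eqP cy yT']].
  by rewrite (cand_leaf_edge_uniq candT aT ca az ay) /I yT' cy.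
have I_path p a : I a -> path (edge_rel T) a p -> I (last a p).
  by elim: p a => //= z p IHp a Ia /andP [az zp]; apply: IHp (I_step _ _ Ia az) zp.
have I_T x : x \in T.1 -> I x.
  move=> xT; have /connectP [p p_path ->] := cand_connect candT vT xT.
  by apply: I_path p_path; rewrite /I vT' cv.
suff T_le : subg_le T T' by move: (maxT T'); rewrite candT' T_le => /eqP.
apply/andP; split; apply/subsetP; first by move=> x /I_T /andP [].
case=> x y xy; have [xy_adj xT _ yx] := subgraph_edgeP subT xy.
have /andP [xT' x_nbr] := I_T x xT.
case: (eqVneq (c x) None) => cx; first exact: trunk_edge trT' xT' cx xy_adj.
move: x_nbr; rewrite cx => /existsP [y' /and3P [xy' /eqP cy' y'T']].
rewrite -(cand_leaf_edge_uniq candT xT cx xy xy') in cy' y'T'.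
rewrite adj_sym in xy_adj.
by have [_ _ _] := subgraph_edgeP subT' (trunk_edge trT' y'T' cy' xy_adj).
Qed.

Lemma trunk_exists v : c v = None -> exists2 T, trunk adj c T & v \in T.1.
Proof.
move=> cv; pose P (R : subg V) := cand R && (v \in R.1).
have P_v : P ([set v], set0).
  rewrite /P /= inE eqxx andbT; apply/and3P; split.
  - by apply/forallP => x; apply/forallP => y; rewrite inE.
  - apply/andP; split; first by apply/set0Pn; exists v; rewrite inE.
    by apply/forall_inP => x /set1P ->; apply/forall_inP => y /set1P ->.
  - by apply/forall_inP => x /set1P ->; rewrite cv.
have [T /andP [candT vT] maxT] := arg_maxnP (fun R : subg V => #|R.1| + #|R.2|) P_v.
exists T => //; rewrite /trunk candT; apply/forallP => R; apply/implyP => candR.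
apply/implyP => /andP [le1 le2].
have := maxT R; rewrite /P candR (subsetP le1 _ vT) => /(_ isT) size_R.
have eq1 : R.1 == T.1.
  rewrite eq_sym eqEcard le1 -(leq_add2r #|R.2|) (leq_trans size_R) //.
  by rewrite leq_add2l subset_leq_card.
have eq2 : R.2 == T.2.
  rewrite eq_sym eqEcard le2 -(leq_add2l #|R.1|) (leq_trans size_R) //.
  by rewrite leq_add2r subset_leq_card.
move: eq1 eq2; case: R T {candR le1 le2 size_R maxT candT vT} => [A B] [A' B'] /=.
by move=> /eqP -> /eqP ->.
Qed.

Local Notation RV := (@RV V adj k c).
Local Notation R_adj := (@R_adj V adj k c).
Local Notation R'_adj := (@R'_adj V adj k c).

Lemma copy_exists v : c v = None -> exists u : RV, (val u).2 = v.
Proof.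
move=> cv; have [T trT vT] := trunk_exists cv.
by exists (exist _ (T, v) (introT andP (conj trT vT))).
Qed.

Lemma copy_uniq (u u' : RV) : c (val u).2 = None -> (val u).2 = (val u').2 -> u = u'.
Proof.
case: u u' => [[T x] Tx] [[T' x'] T'x'] /= cx xx'; subst x'.
have [/andP [trT xT] /andP [trT' xT']] := (Tx, T'x').
by apply: val_inj; rewrite /= (trunk_uniq trT trT' xT xT' cx : T = T').
Qed.

Lemma R_adj_lift (u : RV) w : c (val u).2 = None -> adj (val u).2 w ->
  exists2 u' : RV, (val u').2 = w & R_adj u u'.
Proof.
case: u => [[T x] Tx] /= cx xw; have /andP [trT xT] := Tx.
have xw_T := trunk_edge trT xT cx xw.
have [_ _ wT _] := subgraph_edgeP (cand_subgraph (trunk_cand_of trT)) xw_T.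
by exists (exist _ (T, w) (introT andP (conj trT wT))); rewrite //= /R_adj /= eqxx.
Qed.

Lemma adj_of_R_adj (u u' : RV) : R_adj u u' -> adj (val u).2 (val u').2.
Proof.
case: u => [[T x] Tx] /andP [_ xy]; have /andP [trT _] := Tx.
by have [] := subgraph_edgeP (cand_subgraph (trunk_cand_of trT)) xy.
Qed.

Lemma degree_le_R (u : RV) : c (val u).2 = None ->
  degree adj (val u).2 <= degree R_adj u.
Proof.
move=> cu; apply: leq_trans (leq_imset_card (fun u' : RV => (val u').2) _).
apply: subset_leq_card; apply/subsetP => w; rewrite inE => uw.
by have [u' <- uu'] := R_adj_lift cu uw; apply: imset_f; rewrite inE.
Qed.

Lemma degree_R'_le (u : RV) : degree R'_adj u <= degree R_adj u.
Proof. by apply: subset_leq_card; apply/subsetP => w; rewrite !inE => /andP []. Qed.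

Lemma R'_adj_high (u : RV) w : 2 < degree R_adj u -> R'_adj u w = R_adj u w.
Proof. by move=> high_u; rewrite /R'_adj high_u andbT. Qed.

Hypothesis k_gt2 : 2 < k.
Implicit Types (d : V -> option 'I_k) (u : RV) (a : 'I_k).

Lemma high_R'E u : (k <= degree R'_adj u) = (k <= degree R_adj u).
Proof.
case: (leqP k (degree R_adj u)) => [high_u | low_u].
  suff -> : degree R'_adj u = degree R_adj u by [].
  by apply: eq_card => w; rewrite !inE R'_adj_high // (leq_trans k_gt2).
by apply/negbTE; rewrite -ltnNge (leq_ltn_trans (degree_R'_le u)).
Qed.

Definition pull d : RV -> option 'I_k := fun u => d (val u).2.

(* an invariant of all positions of the game on F reached from c *)
Definition refines d := forall x, d x = None -> c x = None.

Lemma refines_upd d v a : refines d -> refines (upd d v a).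
Proof. by move=> ref_d x; rewrite /upd; case: (x == v) => //; apply: ref_d. Qed.

Lemma legal_pull d u a : legal adj d (val u).2 a -> legal R'_adj (pull d) u a.
Proof.
move=> /forallP legal_a; apply/forallP => u'; apply/implyP => /andP [/adj_of_R_adj uu' _].
exact: implyP (legal_a _) uu'.
Qed.

Lemma legal_pull_high d u a : refines d -> d (val u).2 = None ->
  2 < degree R_adj u -> legal R'_adj (pull d) u a -> legal adj d (val u).2 a.
Proof.
move=> ref_d du high_u /forallP legal_a; apply/forallP => w; apply/implyP => uw.
have [u' <- uu'] := R_adj_lift (ref_d _ du) uw.
by apply: implyP (legal_a u') _; rewrite R'_adj_high.
Qed.

Lemma pull_upd d u a : refines d -> d (val u).2 = None ->
  upd (pull d) u a = pull (upd d (val u).2 a).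
Proof.
move=> ref_d du; apply: functional_extensionality => u'; rewrite /upd /pull.
case: (eqVneq u' u) => [-> | u'u]; first by rewrite !eqxx.
case: eqP => // u'_u; case/eqP: u'u; symmetry.
by apply: copy_uniq; rewrite ?ref_d // -u'_u.
Qed.

Lemma not_stuck_pull d : refines d -> ~ stuck R'_adj (pull d) -> ~ stuck adj d.
Proof.
move=> ref_d not_stuck [v [dv no_legal]].
have [u uv] := copy_exists (ref_d v dv); subst v.
case: (leqP k (degree R_adj u)) => [high_u | low_u].
  apply: not_stuck; exists u; split=> // a; apply: contra (no_legal a).
  exact: legal_pull_high ref_d dv (leq_trans k_gt2 high_u).
have deg_v := leq_ltn_trans (degree_le_R (ref_d _ dv)) low_u.
have [a legal_a] := legal_exists_of_degree_lt d deg_v.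
by move/negP: (no_legal a).
Qed.

Lemma low_degree_of_rcg_done d : refines d -> rcg_done R'_adj (pull d) ->
  forall v, d v = None -> degree adj v < k.
Proof.
move=> ref_d done_d v dv.
have [u uv] := copy_exists (ref_d v dv); subst v.
apply: leq_ltn_trans (degree_le_R (ref_d _ dv)) _.
by rewrite ltnNge -high_R'E; apply/negP => high_u; apply: done_d high_u dv.
Qed.

Lemma cg_alice_of_rcg_alice e : rcg_alice R'_adj e ->
  forall d, refines d -> e = pull d -> cg_alice adj d.
Proof.
pose Pa e (_ : rcg_alice R'_adj e) :=
  forall d, refines d -> e = pull d -> cg_alice adj d.
pose Pb e (_ : rcg_bob R'_adj e) :=
  forall d, refines d -> e = pull d -> cg_bob adj d.
apply: (@rcg_alice_ind' _ _ _ Pa Pb).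
- move=> e0 done_d d ref_d E; subst e0.
  exact: (cg_wins_of_low_degree (low_degree_of_rcg_done ref_d done_d)).1.
- move=> e0 u a not_stuck high_u du legal_a bob_wins IH d ref_d E; subst e0.
  rewrite /high high_R'E in high_u.
  have legal_F := legal_pull_high ref_d du (leq_trans k_gt2 high_u) legal_a.
  apply: (CGA_move (not_stuck_pull ref_d not_stuck) du legal_F).
  by apply: IH; rewrite ?pull_upd //; apply: refines_upd.
- move=> e0 done_d d ref_d E; subst e0.
  exact: (cg_wins_of_low_degree (low_degree_of_rcg_done ref_d done_d)).2.
- move=> e0 not_stuck _ _ alice_wins IH d ref_d E; subst e0.
  apply: CGB_move (not_stuck_pull ref_d not_stuck) _ => v a dv legal_a.
  have [u uv] := copy_exists (ref_d v dv); subst v.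
  by apply: (IH u a dv (legal_pull legal_a)); rewrite ?pull_upd //; apply: refines_upd.
Qed.

End ReducedGraph.

Theorem lemma6p1 (V : finType) (adj : rel V) (c : V -> option 'I_3) :
  symmetric adj -> irreflexive adj -> forest adj -> proper_partial adj c ->
  alice_wins_rcg (@R'_adj V adj 3 c) (@R_col V adj 3 c) ->
  alice_wins_cg adj c.
Proof.
move=> adj_sym adj_irr adj_forest _ /rcg_alice_of_bob win.
by apply: (cg_alice_of_rcg_alice adj_sym adj_irr adj_forest _ win).
Qed.
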